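(* Let $\Gamma$ be a connected simplicial graph which is tree-graded with respect to a collection of subgraphs $\{\Gamma_i\}_{i\in I}$, and fix a basepoint $e\in V(\Gamma)$. Then for each $x\in V(\Gamma)$ there are finite sets $I_x=\{i_0,i_1,\dots,i_k\}\subseteq I$ and $\{x_0,\dots,x_k=x\}\subseteq V(\Gamma)$ such that every geodesic $g$ from $e$ to $x$ can be decomposed as a concatenation of subgeodesics \[ g=g_0\,\overline{g_0}\,g_1\,\overline{g_1}\cdots\overline{g_{k-1}}\,g_k \] such that for each $j$: (i) $g_j\subseteq\Gamma_{i_j}$, the initial vertex of $g_j$ is $e_j$, the unique vertex of $\Gamma_{i_j}$ at minimal distance from $e_0=e$, and the terminal vertex of $g_j$ is $x_j$; and (ii) $\overline{g_j}$ has length at most $1$.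
   Context: A connected simplicial graph $\Gamma$ is tree-graded with respect to a collection $\{\Gamma_i\}_{i\in I}$ of non-empty connected subgraphs if (1) every vertex and every simple loop of $\Gamma$ is contained in some $\Gamma_i$, and (2) for $i\neq j$, $\Gamma_i\not\subseteq\Gamma_j$ and $|V(\Gamma_i)\cap V(\Gamma_j)|\leq 1$. $\Gamma$ carries the shortest path metric. *)

From Stdlib Require Import List Arith Lia.
Import ListNotations.
Set Implicit Arguments.

Section Graphs.
Variable V : Type.

Fixpoint chain (R : V -> V -> Prop) (p : list V) : Prop :=
  match p with
  | a :: ((b :: _) as q) => R a b /\ chain R q
  | _ => True
  end.

Definition walk (R : V -> V -> Prop) (u v : V) (p : list V) : Prop :=
  p <> [] /\ hd u p = u /\ last p u = v /\ chain R p.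

(* there is a walk of length n (= n edges) from u to v *)
Definition walk_len (adj : V -> V -> Prop) (u v : V) (n : nat) : Prop :=
  exists p, walk adj u v p /\ length p = S n.

Definition dist (adj : V -> V -> Prop) (u v : V) (n : nat) : Prop :=
  walk_len adj u v n /\ forall m, walk_len adj u v m -> n <= m.

Definition geodesic (adj : V -> V -> Prop) (u v : V) (p : list V) : Prop :=
  walk adj u v p /\ dist adj u v (length p - 1).

Definition cyc (R : V -> V -> Prop) (c : list V) : Prop :=
  match c with
  | [] => False
  | a :: _ => chain R (c ++ [a])
  end.

Definition simple_loop (adj : V -> V -> Prop) (c : list V) : Prop :=
  3 <= length c /\ NoDup c /\ cyc adj c.

Definition simplicial_graph (adj : V -> V -> Prop) : Prop :=
  (forall u v, adj u v -> adj v u) /\ (forall u, ~ adj u u).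

Definition connected_graph (adj : V -> V -> Prop) : Prop :=
  forall u v, exists p, walk adj u v p.

(* subgraph between positions a and b (inclusive) of a vertex sequence *)
Definition subpath (g : list V) (a b : nat) : list V :=
  firstn (S (b - a)) (skipn a g).

(* Gamma tree-graded w.r.t. the family of subgraphs (Vs i, Es i), i : I.
   Vs i = vertex set of Gamma_i, Es i = (symmetric) edge relation of Gamma_i. *)
Definition tree_graded (I : Type) (adj : V -> V -> Prop)
    (Vs : I -> V -> Prop) (Es : I -> V -> V -> Prop) : Prop :=
  (forall i u v, Es i u v -> adj u v /\ Vs i u /\ Vs i v) /\
  (forall i u v, Es i u v -> Es i v u) /\
  (forall i, exists v, Vs i v) /\
  (forall i u v, Vs i u -> Vs i v -> exists p, walk (Es i) u v p) /\
  (forall v, exists i, Vs i v) /\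
  (forall c, simple_loop adj c -> exists i, Forall (Vs i) c /\ cyc (Es i) c) /\
  (forall i j, i <> j ->
     ~ ((forall v, Vs i v -> Vs j v) /\ (forall u v, Es i u v -> Es j u v))) /\
  (forall i j, i <> j -> forall u v,
     Vs i u -> Vs j u -> Vs i v -> Vs j v -> u = v).

End Graphs.

(* Induction on d(e, x).  Every piece Γ_i has a unique vertex p nearest to e,
   and every geodesic from e into Γ_i passes through p and then stays in Γ_i:
   otherwise a stretch of geodesic leaving Γ_i and coming back, closed up by a
   path inside Γ_i, would be a simple loop not contained in Γ_i.  Let y be the
   predecessor of x on a geodesic.  If x and y lie in a common piece Γ_i, a
   decomposition for the nearest vertex p of Γ_i extends by the subgeodesic
   from p to x inside Γ_i.  Otherwise every geodesic to x passes through y (two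
   different predecessors would close up through x into a simple loop
   containing x and y), and a decomposition for y extends by the edge yx and
   the trivial subgeodesic at x, which is the vertex of its piece nearest to e. *)

From Stdlib Require Import List Arith Lia Classical ClassicalEpsilon.
Import ListNotations.
Set Implicit Arguments.

Lemma least_nat (P : nat -> Prop) :
  (exists n, P n) -> exists n, P n /\ forall m, P m -> n <= m.
Proof.
  intros H.
  destruct (dec_inh_nat_subset_has_unique_least_element P (fun n => classic (P n)) H)
    as (n & [Hn Hmin] & _).
  now exists n.
Qed.

Section Walks.
Variable V : Type.
Implicit Types (R : V -> V -> Prop) (p q : list V).

Lemma last_nth p d : last p d = nth (length p - 1) p d.
Proof.
  induction p as [|a p IH]; [reflexivity|].
  destruct p as [|b p]; [reflexivity|].
  simpl in IH |- *. rewrite IH. now rewrite Nat.sub_0_r.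
Qed.

Lemma last_app p q d : q <> [] -> last (p ++ q) d = last q d.
Proof.
  intros Hq. induction p as [|a p IH]; [reflexivity|].
  rewrite <- app_comm_cons. simpl. rewrite <- IH.
  destruct (p ++ q) eqn:E; [|reflexivity]. now apply app_eq_nil in E as [_ ->].
Qed.

Lemma last_indep p d d' : p <> [] -> last p d = last p d'.
Proof. intros H. rewrite !last_nth. apply nth_indep. destruct p; [congruence|simpl; lia]. Qed.

Lemma nth_tl p k d : nth k (tl p) d = nth (S k) p d.
Proof. destruct p; [destruct k|]; reflexivity. Qed.

Lemma nth_firstn_lt p n t d : t < n -> nth t (firstn n p) d = nth t p d.
Proof.
  intros Ht. rewrite nth_firstn.
  now replace (t <? n) with true by (symmetry; apply Nat.ltb_lt; lia).
Qed.

Lemma chain_nth R p d :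
  chain R p <-> forall t, S t < length p -> R (nth t p d) (nth (S t) p d).
Proof.
  induction p as [|a p IH]; simpl.
  - split; auto. intros _ t H; lia.
  - destruct p as [|b p].
    + split; auto. intros _ t H; simpl in H; lia.
    + change (chain R (a :: b :: p)) with (R a b /\ chain R (b :: p)).
      rewrite IH. split.
      * intros [Hab H] t Ht. destruct t; auto. apply H. simpl in *; lia.
      * intros H. split; [apply (H 0); simpl; lia|].
        intros t Ht. apply (H (S t)). simpl in *; lia.
Qed.

Lemma chain_mono R R' p :
  (forall u v, In u p -> In v p -> R u v -> R' u v) -> chain R p -> chain R' p.
Proof.
  destruct p as [|d p]; [simpl; auto|].
  intros H Hc. rewrite chain_nth with (d := d) in *. intros t Ht.
  apply H; [apply nth_In; lia | apply nth_In; lia | auto].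
Qed.

Lemma chain_app R p q d :
  chain R p -> chain R q -> (p <> [] -> q <> [] -> R (last p d) (hd d q)) ->
  chain R (p ++ q).
Proof.
  induction p as [|a p IH]; simpl; auto.
  intros Hp Hq Hpq. destruct p as [|b p].
  - destruct q as [|c q]; simpl; auto. split; auto. now apply Hpq.
  - destruct Hp as [Hab Hp]. split; auto. apply IH; auto.
    intros _ Hq'. apply Hpq; auto; discriminate.
Qed.

Lemma chain_app_r R p q : chain R (p ++ q) -> chain R q.
Proof.
  induction p as [|a p IH]; [auto|]. intros H. apply IH. simpl in H.
  destruct (p ++ q); [exact I | exact (proj2 H)].
Qed.

Lemma chain_last_snoc R p a : p <> [] -> chain R (p ++ [a]) -> R (last p a) a.
Proof.
  induction p as [|b p IH]; [congruence|]. intros _.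
  destruct p as [|c p]; simpl; [tauto|].
  intros [_ H]. apply IH; [discriminate|exact H].
Qed.

Lemma walk_nth R u v p :
  walk R u v p <->
  p <> [] /\ nth 0 p u = u /\ nth (length p - 1) p u = v /\
  forall t, S t < length p -> R (nth t p u) (nth (S t) p u).
Proof.
  unfold walk. rewrite last_nth, (chain_nth R p u).
  destruct p; simpl; tauto.
Qed.

Lemma walk_mono R R' u v p : (forall a b, R a b -> R' a b) -> walk R u v p -> walk R' u v p.
Proof.
  intros H (Hne & Hh & Hl & Hc). repeat split; auto.
  apply (chain_mono R); auto.
Qed.

Lemma walk_ends R u v p : walk R u v p -> In u p /\ In v p.
Proof.
  rewrite walk_nth. intros (Hne & H0 & H1 & _).
  destruct p as [|a p]; [congruence|]. split.
  - rewrite <- H0. apply nth_In. simpl; lia.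
  - rewrite <- H1. apply nth_In. simpl; lia.
Qed.

Lemma walk_length R u v p : walk R u v p -> u <> v -> 2 <= length p.
Proof.
  intros (Hne & Hh & Hl & _) Huv.
  destruct p as [|a [|b p]]; simpl in *; [congruence | congruence | lia].
Qed.

Lemma walk_rev R u v p : (forall a b, R a b -> R b a) -> walk R u v p -> walk R v u (rev p).
Proof.
  intros Hsym. rewrite !walk_nth, length_rev. intros (Hne & H0 & H1 & Hc).
  destruct p as [|a p']; [congruence|]. set (p := a :: p') in *.
  assert (Hp : 0 < length p) by (simpl; lia).
  repeat split.
  - intros E. apply (f_equal (@length V)) in E. rewrite length_rev in E. simpl in E; lia.
  - rewrite rev_nth by lia. rewrite <- H1. apply nth_indep. lia.
  - rewrite rev_nth by lia. rewrite <- H0. replace (length p - S (length p - 1)) with 0 by lia.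
    apply nth_indep. lia.
  - intros t Ht. rewrite !rev_nth by lia. apply Hsym.
    rewrite !(nth_indep p v u) by lia.
    replace (length p - S t) with (S (length p - S (S t))) by lia. apply Hc. lia.
Qed.

Lemma walk_cons R w u v p : R w u -> walk R u v p -> walk R w v (w :: p).
Proof.
  intros Hwu (Hne & Hh & Hl & Hc). destruct p as [|a p]; [congruence|]. simpl in Hh. subst a.
  split; [discriminate|]. split; [reflexivity|]. split; [|now split].
  rewrite <- Hl. apply last_indep with (p := u :: p). discriminate.
Qed.

Lemma walk_app R u w v p q : walk R u w p -> walk R w v q -> walk R u v (p ++ tl q).
Proof.
  intros (Hne & Hh & Hl & Hc) (Hne' & Hh' & Hl' & Hc').
  destruct q as [|b q]; [congruence|]. simpl in Hh'. subst b.
  destruct p as [|a p]; [congruence|]. simpl in Hh. subst a.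
  repeat split; [discriminate| |].
  - destruct q as [|c q]; [simpl in Hl'; subst v; simpl tl; now rewrite app_nil_r|].
    rewrite last_app by discriminate. cbn [tl]. rewrite <- Hl'.
    apply last_indep with (p := c :: q). discriminate.
  - apply chain_app with (d := u); auto.
    + destruct q as [|c q]; simpl; auto. exact (proj2 Hc').
    + intros _ Hq. destruct q as [|c q]; [now simpl in Hq|].
      simpl hd. rewrite Hl. exact (proj1 Hc').
Qed.

Lemma length_app_tl p q : q <> [] -> length (p ++ tl q) = length p + length q - 1.
Proof. intros H. destruct q; [congruence|]. rewrite length_app. simpl. lia. Qed.

Lemma walk_simplify R u v p :
  walk R u v p -> exists q, walk R u v q /\ NoDup q /\ incl q p.
Proof.
  revert u. induction p as [|a p IH]; intros u (Hne & Hh & Hl & Hc); [congruence|].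
  simpl in Hh. subst a. destruct p as [|b p].
  - exists [u]. simpl in Hl. subst v.
    repeat split; try discriminate; [constructor; auto; constructor | apply incl_refl].
  - destruct Hc as [Hub Hc].
    destruct (IH b) as (q & Hq & Hnd & Hinc).
    { split; [discriminate|]. split; [reflexivity|]. split; [|exact Hc].
      rewrite <- Hl. apply last_indep with (p := b :: p). discriminate. }
    destruct (classic (In u q)) as [Hin|Hin].
    + destruct (in_split _ _ Hin) as (q1 & q2 & ->).
      exists (u :: q2). destruct Hq as (_ & _ & Hql & Hqc). repeat split; try discriminate.
      * rewrite last_app in Hql by discriminate. rewrite <- Hql. apply last_indep. discriminate.
      * now apply chain_app_r in Hqc.
      * apply NoDup_app_remove_l in Hnd. exact Hnd.
      * intros z Hz. right. apply Hinc. apply in_or_app. now right.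
    + exists (u :: q). destruct Hq as (Hqne & Hqh & Hql & Hqc). repeat split; try discriminate.
      * destruct q as [|c q]; [congruence|]. rewrite <- Hql.
        apply last_indep with (p := c :: q). discriminate.
      * change (u :: q) with ([u] ++ q). apply chain_app with (d := u); simpl; auto.
        intros _ _. destruct q; [congruence|]. simpl in Hqh. now subst.
      * now constructor.
      * intros z [Hz|Hz]; [now left | right; apply Hinc, Hz].
Qed.

Lemma length_subpath p a b : a <= b -> b < length p -> length (subpath p a b) = S (b - a).
Proof. intros. unfold subpath. rewrite length_firstn, length_skipn. lia. Qed.

Lemma nth_subpath p a b k d : k <= b - a -> nth k (subpath p a b) d = nth (a + k) p d.
Proof. intros Hk. unfold subpath. rewrite nth_firstn_lt, nth_skipn by lia. reflexivity. Qed.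

Lemma subpath_single p t d : t < length p -> subpath p t t = [nth t p d].
Proof.
  intros Ht. assert (Hl : length (subpath p t t) = 1) by (rewrite length_subpath; lia).
  destruct (subpath p t t) as [|a [|b s]] eqn:E; simpl in Hl; try lia.
  f_equal. rewrite <- (Nat.add_0_r t), <- nth_subpath with (b := t) by lia. now rewrite E.
Qed.

Lemma subpath_firstn p n a b : a <= b -> b < n -> subpath (firstn n p) a b = subpath p a b.
Proof.
  intros Hab Hbn. unfold subpath. rewrite skipn_firstn_comm, firstn_firstn. f_equal. lia.
Qed.

Lemma walk_subpath R u v p a b :
  walk R u v p -> a <= b -> b < length p ->
  walk R (nth a p u) (nth b p u) (subpath p a b).
Proof.
  rewrite !walk_nth. intros (_ & _ & _ & Hc) Hab Hb.
  rewrite length_subpath by lia. repeat split.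
  - intros E. apply (f_equal (@length V)) in E. rewrite length_subpath in E by lia. discriminate.
  - rewrite nth_subpath, Nat.add_0_r by lia. apply nth_indep. lia.
  - rewrite nth_subpath by lia. replace (a + (S (b - a) - 1)) with b by lia. apply nth_indep. lia.
  - intros t Ht. rewrite !nth_subpath by lia. rewrite !(nth_indep p (nth a p u) u) by lia.
    replace (a + S t) with (S (a + t)) by lia. apply Hc. lia.
Qed.

Lemma subpath_0 p b : subpath p 0 b = firstn (S b) p.
Proof. unfold subpath. now rewrite Nat.sub_0_r. Qed.

End Walks.

Definition extend {A} (f : nat -> A) (k : nat) (v : A) (j : nat) : A :=
  if j <=? k then f j else v.

Lemma extend_le {A} (f : nat -> A) k v j : j <= k -> extend f k v j = f j.
Proof.
  intros H. unfold extend.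
  now replace (j <=? k) with true by (symmetry; apply Nat.leb_le; lia).
Qed.

Lemma extend_succ {A} (f : nat -> A) k v : extend f k v (S k) = v.
Proof.
  unfold extend.
  now replace (S k <=? k) with false by (symmetry; apply Nat.leb_gt; lia).
Qed.

Lemma le_last_endpoint (a b : nat -> nat) k :
  (forall j, j <= k -> a j <= b j) -> (forall j, j < k -> b j <= a (S j)) ->
  forall j, j <= k -> b j <= b k.
Proof.
  induction k as [|k IH]; intros Hab Hba j Hj; [now replace j with 0 by lia|].
  destruct (Nat.eq_dec j (S k)) as [->|Hjk]; [lia|].
  specialize (IH (fun j Hj => Hab j ltac:(lia)) (fun j Hj => Hba j ltac:(lia)) j ltac:(lia)).
  specialize (Hba k ltac:(lia)). specialize (Hab (S k) ltac:(lia)). lia.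
Qed.

Section TreeGraded.
Variables (V I : Type) (adj : V -> V -> Prop) (Vs : I -> V -> Prop) (Es : I -> V -> V -> Prop).
Hypothesis simplicial : simplicial_graph adj.
Hypothesis graded : tree_graded adj Vs Es.

Lemma adj_sym u v : adj u v -> adj v u.
Proof. apply simplicial. Qed.

Lemma piece_edge i u v : Es i u v -> adj u v /\ Vs i u /\ Vs i v.
Proof. destruct graded as (H & _). apply H. Qed.

Lemma piece_walk i u v : Vs i u -> Vs i v -> exists p, walk (Es i) u v p.
Proof. destruct graded as (_ & _ & _ & H & _). apply H. Qed.

Lemma piece_of_vertex v : exists i, Vs i v.
Proof. destruct graded as (_ & _ & _ & _ & H & _). apply H. Qed.

Lemma piece_of_loop c : simple_loop adj c -> exists i, Forall (Vs i) c /\ cyc (Es i) c.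
Proof. destruct graded as (_ & _ & _ & _ & _ & H & _). apply H. Qed.

Lemma piece_walk_adj i u v p : walk (Es i) u v p -> walk adj u v p.
Proof. apply walk_mono. intros a b H. exact (proj1 (piece_edge H)). Qed.

Lemma walk_in_piece i u v p : walk (Es i) u v p -> Vs i u -> Forall (Vs i) p.
Proof.
  rewrite walk_nth. intros (_ & H0 & _ & Hc) Hu. apply Forall_forall. intros z Hz.
  apply (In_nth _ _ u) in Hz as [[|t] [Ht <-]]; [now rewrite H0|].
  exact (proj2 (proj2 (piece_edge (Hc t Ht)))).
Qed.

Lemma simple_walk_loop u v p :
  walk adj u v p -> NoDup p -> 3 <= length p -> adj v u -> simple_loop adj p.
Proof.
  intros (Hne & Hh & Hl & Hc) Hnd Hlen Hvu. repeat split; auto.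
  destruct p as [|a p]; [congruence|]. simpl in Hh. subst a.
  apply chain_app with (d := u); [exact Hc | simpl; auto |]. intros _ _. now rewrite Hl.
Qed.

(* The piece containing the loop shares two vertices with Γ_i, hence is Γ_i. *)
Lemma loop_in_piece i c u v :
  simple_loop adj c -> In u c -> In v c -> u <> v -> Vs i u -> Vs i v ->
  Forall (Vs i) c /\ cyc (Es i) c.
Proof.
  intros Hloop Hu Hv Huv Hiu Hiv.
  destruct (piece_of_loop Hloop) as (j & Hj & Hcyc).
  destruct graded as (_ & _ & _ & _ & _ & _ & _ & Hmeet).
  destruct (classic (i = j)) as [->|Hij]; [now split|].
  rewrite Forall_forall in Hj. exfalso. apply Huv. apply (Hmeet i j Hij); auto.
Qed.

Lemma edge_in_piece i u v : Vs i u -> Vs i v -> adj u v -> Es i u v.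
Proof.
  intros Hu Hv Huv.
  assert (Hne : u <> v) by (intros ->; now apply (proj2 simplicial v)).
  destruct (piece_walk Hv Hu) as [p Hp].
  destruct (walk_simplify Hp) as (q & Hq & Hnd & _).
  destruct (le_lt_dec 3 (length q)) as [Hlen|Hlen].
  - assert (Hloop : simple_loop adj q).
    { apply (simple_walk_loop (piece_walk_adj Hq)); auto. }
    destruct (walk_ends Hq) as [Hvq Huq].
    destruct (loop_in_piece Hloop Huq Hvq Hne Hu Hv) as [_ Hcyc].
    destruct Hq as (Hqne & Hqh & Hql & _). destruct q as [|a q]; [congruence|].
    simpl in Hqh. subst a. rewrite <- Hql at 1. apply chain_last_snoc; [discriminate|exact Hcyc].
  - assert (Hlen2 := walk_length Hq (not_eq_sym Hne)).
    destruct Hq as (_ & Hqh & Hql & Hqc).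
    destruct q as [|a [|b [|c q]]]; simpl in *; try lia. subst.
    destruct graded as (_ & Hsym & _). apply Hsym, Hqc.
Qed.

(* A walk that leaves a piece and comes back, closed up inside the piece,
   would give a simple loop through a vertex outside the piece. *)
Lemma excursion_endpoints_eq i u v w :
  Vs i u -> Vs i v -> walk adj u v w -> 3 <= length w ->
  (forall t, 0 < t < length w - 1 -> ~ Vs i (nth t w u)) -> u = v.
Proof.
  intros Hu Hv Hw Hlen Hout. apply NNPP. intros Huv.
  pose proof Hw as (_ & H0 & Hlast & Hc)%walk_nth.
  set (a := nth 1 w u).
  assert (Ha : ~ Vs i a) by (apply Hout; lia).
  assert (Hua : adj u a) by (rewrite <- H0 at 1; apply Hc; lia).
  assert (Hav : walk adj a v (subpath w 1 (length w - 1))).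
  { rewrite <- Hlast. apply (walk_subpath Hw); lia. }
  destruct (walk_simplify Hav) as (q & Hq & Hqnd & Hqinc).
  assert (Hq_piece : forall z, In z q -> Vs i z -> z = v).
  { intros z Hz Hiz. apply Hqinc, (In_nth _ _ u) in Hz as (k & Hk & <-).
    rewrite length_subpath in Hk by lia. rewrite nth_subpath in * by lia.
    destruct (Nat.eq_dec (1 + k) (length w - 1)) as [->|Hk']; [exact Hlast|].
    exfalso. apply (Hout (1 + k)); [lia | exact Hiz]. }
  destruct (piece_walk Hv Hu) as [r0 Hr0].
  destruct (walk_simplify Hr0) as (r & Hr & Hrnd & _).
  pose proof (walk_in_piece Hr Hv) as Hr_piece. rewrite Forall_forall in Hr_piece.
  destruct r as [|b r]; [now destruct Hr|].
  assert (b = v) as -> by apply Hr. apply NoDup_cons_iff in Hrnd as [Hvr Hrnd].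
  assert (Hloop : simple_loop adj (q ++ r)).
  { apply (simple_walk_loop (u := a) (v := u)); auto.
    - exact (walk_app Hq (piece_walk_adj Hr)).
    - apply NoDup_app; auto. intros z Hzq Hzr.
      rewrite (Hq_piece z Hzq (Hr_piece z (or_intror Hzr))) in Hzr. contradiction.
    - assert (2 <= length q) by (apply (walk_length Hq); intros ->; contradiction).
      destruct r; [destruct Hr as (_ & _ & Hl & _); simpl in Hl; congruence|].
      rewrite length_app. simpl. lia. }
  assert (Hur : In u r).
  { destruct (walk_ends Hr) as [_ [->|Hur]]; [contradiction|exact Hur]. }
  destruct (walk_ends Hq) as [Haq Hvq].
  destruct (loop_in_piece Hloop (in_or_app _ _ _ (or_intror Hur)) (in_or_app _ _ _ (or_introl Hvq))
    Huv Hu Hv) as [Hall _].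
  rewrite Forall_forall in Hall. apply Ha, Hall, in_or_app. now left.
Qed.

Variable e : V.
Hypothesis connected : connected_graph adj.

Definition depth (v : V) : nat := epsilon (inhabits 0) (dist adj e v).

Lemma depth_spec v : dist adj e v (depth v).
Proof.
  unfold depth. apply epsilon_spec.
  destruct (connected e v) as [p Hp].
  destruct (@least_nat (walk_len adj e v)) as [n Hn].
  - exists (length p - 1), p. split; [exact Hp|].
    destruct Hp as [Hne _]. destruct p; [congruence | simpl; lia].
  - now exists n.
Qed.

Lemma dist_depth v n : dist adj e v n -> n = depth v.
Proof.
  intros [Hn Hmin]. destruct (depth_spec v) as [Hd Hdmin].
  specialize (Hmin _ Hd). specialize (Hdmin _ Hn). lia.
Qed.

Lemma geodesic_exists x : exists g, geodesic adj e x g.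
Proof.
  destruct (depth_spec x) as [(g & Hg & Hlen) Hmin]. exists g.
  split; [exact Hg|]. rewrite Hlen. simpl. rewrite Nat.sub_0_r. split; [exists g|]; auto.
Qed.

Section Geodesic.
Variables (x : V) (g : list V).
Hypothesis geo : geodesic adj e x g.

Lemma geodesic_length : length g = S (depth x).
Proof.
  destruct geo as [[Hne _] Hd]. rewrite <- (dist_depth Hd).
  destruct g; [congruence | simpl; lia].
Qed.

Lemma geodesic_first : nth 0 g e = e.
Proof. destruct geo as [Hw _]. now apply walk_nth in Hw as (_ & H0 & _). Qed.

Lemma geodesic_last : nth (length g - 1) g e = x.
Proof. destruct geo as [Hw _]. now apply walk_nth in Hw as (_ & _ & Hlast & _). Qed.

Lemma geodesic_edge t : S t < length g -> adj (nth t g e) (nth (S t) g e).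
Proof. destruct geo as [Hw _]. apply walk_nth in Hw as (_ & _ & _ & Hc). apply Hc. Qed.

(* A shorter walk to the t-th vertex, followed by the rest of g, would be
   a walk to x shorter than g. *)
Lemma dist_geodesic_nth t : t < length g -> dist adj e (nth t g e) t.
Proof.
  intros Ht. pose proof geo as [Hw [_ Hmin]]. split.
  - exists (subpath g 0 t). rewrite length_subpath by lia. split; [|f_equal; lia].
    rewrite <- geodesic_first at 1. apply (walk_subpath Hw); lia.
  - intros m (h & Hh & Hlh).
    assert (Hrest : walk adj (nth t g e) x (subpath g t (length g - 1))).
    { rewrite <- geodesic_last. apply (walk_subpath Hw); lia. }
    set (rest := subpath g t (length g - 1)) in Hrest.
    assert (Hlen : length (h ++ tl rest) = S (m + (length g - 1 - t))).
    { rewrite length_app_tl by apply Hrest. unfold rest. rewrite length_subpath; lia. }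
    enough (length g - 1 <= m + (length g - 1 - t)) by lia.
    apply Hmin. exists (h ++ tl rest). split; [exact (walk_app Hh Hrest) | exact Hlen].
Qed.

Lemma depth_geodesic_nth t : t < length g -> depth (nth t g e) = t.
Proof. intros Ht. symmetry. now apply dist_depth, dist_geodesic_nth. Qed.

Lemma geodesic_firstn t : t < length g -> geodesic adj e (nth t g e) (firstn (S t) g).
Proof.
  intros Ht. rewrite <- subpath_0. split.
  - rewrite <- geodesic_first at 1. apply (walk_subpath (proj1 geo)); lia.
  - rewrite length_subpath by lia. replace (S (t - 0) - 1) with t by lia.
    now apply dist_geodesic_nth.
Qed.

Lemma geodesic_NoDup : NoDup g.
Proof.
  apply (NoDup_nth g e). intros s t Hs Ht E.
  now rewrite <- (depth_geodesic_nth Hs), <- (depth_geodesic_nth Ht), E.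
Qed.

Lemma depth_in_geodesic_prefix t z : t < length g -> In z (firstn (S t) g) -> depth z <= t.
Proof.
  intros Ht Hz. apply (In_nth _ _ e) in Hz as (k & Hk & <-).
  rewrite length_firstn in Hk. rewrite nth_firstn_lt, depth_geodesic_nth; lia.
Qed.

Lemma geodesic_last_edge n : depth x = S n -> adj (nth n g e) x.
Proof.
  intros Hx. rewrite <- geodesic_last.
  replace (length g - 1) with (S n) by (rewrite geodesic_length; lia).
  apply geodesic_edge. rewrite geodesic_length. lia.
Qed.

End Geodesic.

Lemma depth_basepoint : depth e = 0.
Proof.
  symmetry. apply dist_depth. split; [|lia].
  exists [e]. repeat split. discriminate.
Qed.

Lemma depth_zero v : depth v = 0 -> v = e.
Proof.
  intros Hv. destruct (geodesic_exists v) as [g Hg].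
  rewrite <- (geodesic_last Hg), (geodesic_length Hg), Hv. exact (geodesic_first Hg).
Qed.


Definition gate (i : I) (p : V) : Prop :=
  Vs i p /\ forall v, Vs i v -> v <> p -> forall n m, dist adj e p n -> dist adj e v m -> n < m.

Definition nearest (i : I) (p : V) : Prop := Vs i p /\ forall v, Vs i v -> depth p <= depth v.

Lemma nearest_exists i w : Vs i w -> exists p, nearest i p.
Proof.
  intros Hw.
  destruct (@least_nat (fun n => exists v, Vs i v /\ depth v = n)) as (n & (p & Hp & <-) & Hmin).
  - now exists (depth w), w.
  - exists p. split; [exact Hp|]. intros v Hv. apply Hmin. now exists v.
Qed.

(* The first exit from the piece and the next re-entry would bound an excursion. *)
Lemma simple_walk_piece_convex i u v w s r t :
  walk adj u v w -> NoDup w -> s <= r <= t -> t < length w ->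
  Vs i (nth s w u) -> Vs i (nth t w u) -> Vs i (nth r w u).
Proof.
  intros Hw Hnd Hr Ht Hs Htt. apply NNPP. intros Hrout.
  assert (Hsrt : s < r < t) by (split; apply Nat.le_neq; split; try lia; intros ->; contradiction).
  destruct (@least_nat (fun r1 => s < r1 /\ ~ Vs i (nth r1 w u))) as (r1 & [Hsr1 Hr1] & Hr1min).
  { now exists r. }
  assert (Hr1r : r1 <= r) by (apply Hr1min; split; [lia | exact Hrout]).
  destruct (@least_nat (fun t1 => r1 < t1 /\ Vs i (nth t1 w u))) as (t1 & [Hr1t1 Ht1] & Ht1min).
  { exists t. split; [lia | exact Htt]. }
  assert (Ht1t : t1 <= t) by (apply Ht1min; split; [lia | exact Htt]).
  assert (Hprev : Vs i (nth (r1 - 1) w u)).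
  { destruct (Nat.eq_dec (r1 - 1) s) as [->|Hne]; [exact Hs|].
    apply NNPP. intros Hout. enough (r1 <= r1 - 1) by lia.
    apply Hr1min. split; [lia | exact Hout]. }
  assert (E : nth (r1 - 1) w u = nth t1 w u).
  { assert (Hsub := walk_subpath (a := r1 - 1) (b := t1) Hw ltac:(lia) ltac:(lia)).
    apply (excursion_endpoints_eq Hprev Ht1 Hsub); rewrite length_subpath by lia; [lia|].
    intros k Hk. rewrite nth_subpath, nth_indep with (d' := u) by lia.
    destruct (Nat.eq_dec k 1) as [->|Hk1]; [now replace (r1 - 1 + 1) with r1 by lia|].
    intros Hin. enough (t1 <= r1 - 1 + k) by lia. apply Ht1min. split; [lia | exact Hin]. }
  apply (NoDup_nth w u) in E; [lia | exact Hnd | lia | lia].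
Qed.

Section Nearest.
Variables (i : I) (p : V).
Hypothesis near : nearest i p.

(* Otherwise a geodesic to p, reversed, followed by the part of g before it
   first meets the piece, would be an excursion from p. *)
Lemma geodesic_enters_at_nearest z g : Vs i z -> geodesic adj e z g -> nth (depth p) g e = p.
Proof.
  intros Hz Hg. pose proof (geodesic_length Hg) as Hlen.
  destruct (@least_nat (fun s => s < length g /\ Vs i (nth s g e))) as (s & [Hs Hsi] & Hsmin).
  { exists (length g - 1). split; [lia|]. now rewrite (geodesic_last Hg). }
  enough (Hps : p = nth s g e) by (rewrite Hps, (depth_geodesic_nth Hg Hs); reflexivity).
  destruct (geodesic_exists p) as [h Hh]. pose proof (geodesic_length Hh) as Hlh.
  assert (Hdps : depth p <= s) by (rewrite <- (depth_geodesic_nth Hg Hs); apply near, Hsi).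
  destruct (Nat.eq_dec (depth p) 0) as [H0|H0].
  - assert (s = 0) as ->.
    { enough (s <= 0) by lia. apply Hsmin. rewrite (geodesic_first Hg), <- (depth_zero p H0).
      split; [lia | apply near]. }
    now rewrite (geodesic_first Hg), (depth_zero p H0).
  - pose proof (walk_app (walk_rev adj_sym (proj1 Hh)) (proj1 (geodesic_firstn Hg Hs))) as Hw.
    assert (Hwlen : length (rev h ++ tl (firstn (S s) g)) = S (depth p + s)).
    { rewrite length_app_tl, length_rev, length_firstn; [lia|].
      now apply (geodesic_firstn Hg Hs). }
    apply (excursion_endpoints_eq (proj1 near) Hsi Hw); rewrite Hwlen; [lia|].
    intros t Ht Hin.
    destruct (Nat.lt_ge_cases t (length h)) as [Hth|Hth].
    + rewrite app_nth1, rev_nth, nth_indep with (d' := e) in Hin by (rewrite ?length_rev; lia).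
      pose proof (proj2 near _ Hin) as Hle.
      rewrite (depth_geodesic_nth Hh) in Hle; lia.
    + rewrite app_nth2, length_rev, nth_tl, nth_firstn_lt, nth_indep with (d' := e) in Hin
        by (rewrite ?length_rev; lia).
      enough (s <= S (t - length h)) by lia. apply Hsmin. split; [lia | exact Hin].
Qed.

Lemma geodesic_stays_after_nearest z g t :
  Vs i z -> geodesic adj e z g -> depth p <= t < length g -> Vs i (nth t g e).
Proof.
  intros Hz Hg Ht.
  apply (simple_walk_piece_convex (s := depth p) (t := length g - 1) (proj1 Hg));
    [apply (geodesic_NoDup Hg) | lia | lia | |].
  - rewrite (geodesic_enters_at_nearest Hz Hg). apply near.
  - now rewrite (geodesic_last Hg).
Qed.

Lemma geodesic_tail_in_piece z g :
  Vs i z -> geodesic adj e z g ->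
  Forall (Vs i) (subpath g (depth p) (length g - 1)) /\
  chain (Es i) (subpath g (depth p) (length g - 1)).
Proof.
  intros Hz Hg. pose proof (geodesic_length Hg) as Hlen. pose proof (proj2 near z Hz).
  assert (Hin : Forall (Vs i) (subpath g (depth p) (length g - 1))).
  { apply Forall_forall. intros v Hv. apply (In_nth _ _ e) in Hv as (k & Hk & <-).
    rewrite length_subpath in Hk by lia. rewrite nth_subpath by lia.
    apply (geodesic_stays_after_nearest Hz Hg). lia. }
  split; [exact Hin|].
  apply (chain_mono adj); [|apply (walk_subpath (proj1 Hg)); lia].
  rewrite Forall_forall in Hin. intros u v Hu Hv. apply edge_in_piece; auto.
Qed.

Lemma nearest_gate : gate i p.
Proof.
  split; [apply near|]. intros v Hv Hvp n m Hn Hm.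
  rewrite (dist_depth Hn), (dist_depth Hm).
  destruct (geodesic_exists v) as [g Hg].
  pose proof (geodesic_enters_at_nearest Hv Hg) as Hp.
  destruct (Nat.eq_dec (depth p) (depth v)) as [E|E]; [|pose proof (proj2 near v Hv); lia].
  exfalso. apply Hvp. rewrite <- Hp, <- (geodesic_last Hg), (geodesic_length Hg), E.
  f_equal. lia.
Qed.

End Nearest.

(* Two distinct predecessors of x on geodesics are joined by a walk avoiding
   x, which closes up through x into a simple loop containing x. *)
Lemma geodesics_share_predecessor x n g g' :
  depth x = S n -> geodesic adj e x g -> geodesic adj e x g' ->
  (forall i, Vs i x -> ~ Vs i (nth n g e)) -> nth n g' e = nth n g e.
Proof.
  intros Hx Hg Hg' Hsep. apply NNPP. intros Hne.
  pose proof (geodesic_length Hg) as Hlen. pose proof (geodesic_length Hg') as Hlen'.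
  pose proof (walk_app (walk_rev adj_sym (proj1 (geodesic_firstn Hg' (t := n) ltac:(lia))))
                       (proj1 (geodesic_firstn Hg (t := n) ltac:(lia)))) as Hw.
  destruct (walk_simplify Hw) as (q & Hq & Hqnd & Hqinc).
  assert (Hxq : ~ In x q).
  { intros Hin. apply Hqinc, in_app_or in Hin as [Hin|Hin].
    - apply in_rev, (depth_in_geodesic_prefix Hg') in Hin; lia.
    - assert (Hin' : In x (firstn (S n) g))
        by (destruct (firstn (S n) g); [contradiction | now right]).
      apply (depth_in_geodesic_prefix Hg) in Hin'; lia. }
  assert (Hloop : simple_loop adj (x :: q)).
  { apply (simple_walk_loop (walk_cons x (adj_sym (geodesic_last_edge Hg' Hx)) Hq)).
    - now constructor.
    - pose proof (walk_length Hq Hne). simpl. lia.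
    - exact (geodesic_last_edge Hg Hx). }
  destruct (piece_of_loop Hloop) as (i & Hi & _). rewrite Forall_forall in Hi.
  apply (Hsep i); apply Hi; [now left | right; apply (walk_ends Hq)].
Qed.

(* g_j is subpath g (a j) (b j); bar g_j runs from position b j to a (S j). *)
Definition segmented (k : nat) (idx : nat -> I) (xs es : nat -> V) (g : list V) : Prop :=
  exists a b : nat -> nat,
    a 0 = 0 /\ b k = length g - 1 /\
    (forall j, j <= k -> a j <= b j) /\
    (forall j, j < k -> b j <= a (S j) /\ a (S j) <= b j + 1) /\
    (forall j, j <= k ->
       nth (a j) g e = es j /\ nth (b j) g e = xs j /\
       Forall (Vs (idx j)) (subpath g (a j) (b j)) /\
       chain (Es (idx j)) (subpath g (a j) (b j))).

Definition decomposition (x : V) : Prop :=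
  exists (k : nat) (idx : nat -> I) (xs : nat -> V) (es : nat -> V),
    xs k = x /\ es 0 = e /\
    (forall j, j <= k -> gate (idx j) (es j)) /\
    (forall g, geodesic adj e x g -> segmented k idx xs es g).

Lemma segmented_snoc k idx xs es g t s i x p :
  segmented k idx xs es (firstn (S t) g) -> t <= s <= S t -> s < length g ->
  nth s g e = p -> nth (length g - 1) g e = x ->
  Forall (Vs i) (subpath g s (length g - 1)) -> chain (Es i) (subpath g s (length g - 1)) ->
  segmented (S k) (extend idx k i) (extend xs k x) (extend es k p) g.
Proof.
  intros (a & b & Ha0 & Hbk & Hab & Hgap & Hseg) Hts Hs Hp Hx HF HC.
  rewrite length_firstn, Nat.min_l in Hbk by lia.
  assert (Hbt : forall j, j <= k -> b j <= t).
  { intros j Hj. pose proof (le_last_endpoint a b Hab (fun j Hj => proj1 (Hgap j Hj)) Hj). lia. }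
  exists (extend a k s), (extend b k (length g - 1)).
  split; [rewrite extend_le; lia|]. split; [apply extend_succ|].
  assert (Hcase : forall j, j <= S k -> j <= k \/ j = S k) by lia.
  split; [|split].
  - intros j [Hj| ->]%Hcase; [rewrite !extend_le by lia; auto | rewrite !extend_succ; lia].
  - intros j Hj. rewrite (extend_le b) by lia.
    destruct (Hcase (S j) ltac:(lia)) as [Hj'| ->%Nat.succ_inj].
    + rewrite !extend_le by lia. apply Hgap. lia.
    + rewrite extend_succ. lia.
  - intros j [Hj| ->]%Hcase; [|now rewrite !extend_succ].
    rewrite !extend_le by lia. specialize (Hab j Hj). specialize (Hbt j Hj).
    destruct (Hseg j Hj) as (H1 & H2 & H3 & H4).
    rewrite !nth_firstn_lt, !subpath_firstn in * by lia. auto.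
Qed.

Lemma decomposition_snoc y x i p t s :
  decomposition y -> gate i p -> t <= s <= S t ->
  (forall g, geodesic adj e x g ->
     s < length g /\ nth t g e = y /\ nth s g e = p /\
     Forall (Vs i) (subpath g s (length g - 1)) /\ chain (Es i) (subpath g s (length g - 1))) ->
  decomposition x.
Proof.
  intros (k & idx & xs & es & Hxk & He0 & Hgates & Hgeo) Hp Hts Hx.
  exists (S k), (extend idx k i), (extend xs k x), (extend es k p).
  split; [apply extend_succ|]. split; [rewrite extend_le; [exact He0 | lia]|]. split.
  - intros j Hj. destruct (Nat.eq_dec j (S k)) as [->|Hjk]; [now rewrite !extend_succ|].
    rewrite !extend_le by lia. apply Hgates. lia.
  - intros g Hg. destruct (Hx g Hg) as (Hs & Hy & Hsp & HF & HC).
    apply segmented_snoc with (t := t) (s := s); auto; [|exact (geodesic_last Hg)].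
    apply Hgeo. rewrite <- Hy. apply (geodesic_firstn Hg). lia.
Qed.

Lemma decomposition_basepoint : decomposition e.
Proof.
  destruct (piece_of_vertex e) as [i Hi].
  assert (Hnear : nearest i e) by (split; [exact Hi | intros; rewrite depth_basepoint; lia]).
  exists 0, (fun _ => i), (fun _ => e), (fun _ => e).
  split; [reflexivity|]. split; [reflexivity|]. split; [intros; exact (nearest_gate Hnear)|].
  intros g Hg.
  assert (Hlen : length g = 1) by (rewrite (geodesic_length Hg), depth_basepoint; reflexivity).
  exists (fun _ => 0), (fun _ => 0).
  rewrite Hlen, (subpath_single g e), (geodesic_first Hg) by lia.
  repeat split; auto; intros; lia.
Qed.

Lemma decomposition_through_nearest x i p :
  nearest i p -> Vs i x -> decomposition p -> decomposition x.
Proof.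
  intros Hnear Hx Hp.
  apply (decomposition_snoc (t := depth p) (s := depth p) Hp (nearest_gate Hnear)); [lia|].
  intros g Hg. pose proof (geodesic_length Hg). pose proof (proj2 Hnear x Hx).
  pose proof (geodesic_enters_at_nearest Hnear Hx Hg).
  destruct (geodesic_tail_in_piece Hnear Hx Hg). repeat split; auto. lia.
Qed.

Lemma decomposition_through_bridge x y n :
  depth x = S n -> (forall i, Vs i x -> ~ Vs i y) ->
  (forall g, geodesic adj e x g -> nth n g e = y) -> decomposition y -> decomposition x.
Proof.
  intros Hx Hsep Hpred Hy.
  destruct (piece_of_vertex x) as [i Hi].
  assert (Hlast : forall g, geodesic adj e x g -> nth (S n) g e = x).
  { intros g Hg. rewrite <- (geodesic_last Hg), (geodesic_length Hg). f_equal. lia. }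
  assert (Hnear : nearest i x).
  { destruct (nearest_exists Hi) as [p Hp]. destruct (geodesic_exists x) as [g Hg].
    assert (Hdp : depth p = S n).
    { pose proof (proj2 Hp x Hi). enough (~ depth p <= n) by lia. intros Hpn.
      apply (Hsep i Hi). rewrite <- (Hpred g Hg).
      apply (geodesic_stays_after_nearest Hp Hi Hg). pose proof (geodesic_length Hg). lia. }
    rewrite <- (Hlast g Hg), <- Hdp, (geodesic_enters_at_nearest Hp Hi Hg). exact Hp. }
  apply (decomposition_snoc (t := n) (s := S n) Hy (nearest_gate Hnear)); [lia|].
  intros g Hg. pose proof (geodesic_length Hg) as Hlen.
  replace (length g - 1) with (S n) by lia. rewrite (subpath_single g e) by lia.
  rewrite (Hlast g Hg), (Hpred g Hg).
  split; [lia|]. split; [reflexivity|]. split; [reflexivity|].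
  split; [now constructor | exact Logic.I].
Qed.

Lemma decomposition_exists x : decomposition x.
Proof.
  induction x as [x IH] using (well_founded_ind (well_founded_ltof _ depth)).
  destruct (depth x) as [|n] eqn:Hx; [rewrite (depth_zero x Hx); exact decomposition_basepoint|].
  destruct (geodesic_exists x) as [g Hg]. pose proof (geodesic_length Hg) as Hlen.
  set (y := nth n g e).
  assert (Hy : depth y = n) by (apply (depth_geodesic_nth Hg); lia).
  destruct (classic (exists i, Vs i x /\ Vs i y)) as [(i & Hix & Hiy)|Hsep].
  - destruct (nearest_exists Hix) as [p Hp].
    apply (decomposition_through_nearest Hp Hix), IH. unfold ltof.
    pose proof (proj2 Hp y Hiy). lia.
  - apply (decomposition_through_bridge (y := y) Hx).
    + intros i Hix Hiy. apply Hsep. now exists i.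
    + intros g' Hg'. apply (geodesics_share_predecessor Hx Hg Hg').
      intros i Hix Hiy. apply Hsep. now exists i.
    + apply IH. unfold ltof. lia.
Qed.

End TreeGraded.

Theorem lemma4p4 (V I : Type) (adj : V -> V -> Prop)
    (Vs : I -> V -> Prop) (Es : I -> V -> V -> Prop) (e : V) :
  simplicial_graph adj -> connected_graph adj ->
  tree_graded adj Vs Es ->
  forall x : V,
  exists (k : nat) (idx : nat -> I) (xs : nat -> V) (es : nat -> V),
    xs k = x /\ es 0 = e /\
    (* e_j is the unique vertex of Gamma_{i_j} at minimal distance from e *)
    (forall j, j <= k ->
       Vs (idx j) (es j) /\
       forall v, Vs (idx j) v -> v <> es j ->
         forall n m, dist adj e (es j) n -> dist adj e v m -> n < m) /\
    (forall g, geodesic adj e x g ->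
       exists a b : nat -> nat,
         a 0 = 0 /\ b k = length g - 1 /\
         (forall j, j <= k -> a j <= b j) /\
         (* the connecting pieces bar g_j have length at most 1 *)
         (forall j, j < k -> b j <= a (S j) /\ a (S j) <= b j + 1) /\
         (forall j, j <= k ->
            nth (a j) g e = es j /\ nth (b j) g e = xs j /\
            Forall (Vs (idx j)) (subpath g (a j) (b j)) /\
            chain (Es (idx j)) (subpath g (a j) (b j)))).
Proof.
  intros simplicial connected graded x.
  exact (decomposition_exists simplicial graded e connected x).
Qed.
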